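(* Let $s\ge2$, $n\ge1$, $m\ge1$, $i\ge1$, and let $j'\ge1$ be minimal such that $m\le a_{i,j'}$. If $i=1$, or if $i>1$ and $j'=1$, then \[ \lambda_s(n,m)\le 2^{s-1}n+j'^{\,s-2}(m-1). \]
   Context: For $s\ge1$, a sequence contains an alternation of length $s+2$ if there are distinct symbols $a\ne b$ and indices $i_1<\dots<i_{s+2}$ whose entries are alternately $a,b,a,b,\dots$. A block is a sequence of pairwise distinct symbols. $\lambda_s(n,m)$ is the maximum length of a sequence using at most $n$ distinct symbols that contains no alternation of length $s+2$ and can be written as a concatenation of at most $m$ blocks. Ackermann's function: $a_{1,j}=2^j$ ($j\ge1$), $a_{i,1}=2$ ($i\ge2$), $a_{i,j}=w\cdot a_{i-1,w}$ with $w=a_{i,j-1}$ ($i,j\ge2$). *)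

From mathcomp Require Import all_boot.
Set Implicit Arguments. Unset Strict Implicit. Unset Printing Implicit Defensive.

Definition alt_word (a b k : nat) : seq nat :=
  mkseq (fun t => if odd t then b else a) k.

Definition has_alternation (k : nat) (w : seq nat) : Prop :=
  exists a b : nat, a <> b /\ subseq (alt_word a b k) w.

Definition block (b : seq nat) : bool := uniq b.

Definition at_most_m_blocks (m : nat) (w : seq nat) : Prop :=
  exists bs : seq (seq nat), size bs <= m /\ all block bs /\ w = flatten bs.

Definition admissible (s n m : nat) (w : seq nat) : Prop :=
  size (undup w) <= n /\ ~ has_alternation s.+2 w /\ at_most_m_blocks m w.

(* lambda_s(n,m) <= B  iff every admissible sequence has length <= B
   (lambda_s(n,m) is the maximum of these lengths; the empty sequence
   is always admissible). *)
Definition lambda_le (s n m B : nat) : Prop :=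
  forall w : seq nat, admissible s n m w -> size w <= B.

(* Ackermann's function a_{i,j} (meaningful for i, j >= 1; other values junk):
   a_{1,j} = 2^j, a_{i,1} = 2, a_{i,j} = w * a_{i-1,w} with w = a_{i,j-1}. *)
Fixpoint ack (i : nat) : nat -> nat :=
  match i with
  | 0 => fun _ => 0
  | 1 => fun j => 2 ^ j
  | S ((S _) as i1) =>
      fix g (j : nat) : nat :=
        match j with
        | 0 => 0
        | 1 => 2
        | S j1 => let w := g j1 in w * ack i1 w
        end
  end.

Example ack_test : [/\ ack 1 3 = 8, ack 2 1 = 2, ack 2 2 = 8 & ack 3 2 = 2 * ack 2 2].
Proof. by []. Qed.

From mathcomp Require Import all_boot zify.

(* We prove a stronger, Ackermann-free statement: for all t, j, n, m with
   m <= 2^j, every sequence admissible for lambda_{t+2}(n, m) has length at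
   most 2^(t+1) n + j^t (m - 1).  Under the hypotheses of the theorem,
   m <= a_{i,j'} = 2^j' (for i > 1 and j' = 1 because a_{i,1} = 2 = 2^1),
   so the theorem is the instance t = s - 2, j = j'.
   - Base t = 0 (no abab): the classical Davenport-Schinzel estimate
     |w| <= 2 #symbols(w) + #adjacent repetitions(w), and a concatenation of
     m blocks has at most m - 1 adjacent repetitions.
   - Step t -> t + 1, by induction on j: split the m blocks into halves L, R
     of m/2 and m - m/2 blocks (each at most 2^j).  Symbols living in only
     one half are bounded by the induction on j; the shared symbols, restricted
     to one half, avoid alternations of length t + 3 (an alternation there
     extends by one occurrence in the other half), so they are bounded by the
     hypothesis for t.  Summing and j^(t+1) + j^t <= (j+1)^(t+1) conclude. *)

Lemma alt_word_rcons a b k :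
  alt_word a b k.+1 = rcons (alt_word a b k) (if odd k then b else a).
Proof. by rewrite /alt_word mkseqS. Qed.

Lemma alt_word_cons a b k : alt_word a b k.+1 = a :: alt_word b a k.
Proof.
rewrite /alt_word /mkseq /= -[1]addn0 iotaDl -map_comp; congr (_ :: _).
by apply: eq_map => t /=; case: (odd t).
Qed.

Lemma alt_word_mem a b k : 2 <= k -> (a \in alt_word a b k) && (b \in alt_word a b k).
Proof. by case: k => [|[|k]] // _; rewrite !alt_word_cons !inE !eqxx orbT. Qed.

Lemma has_alternation_subseq k u w :
  subseq u w -> has_alternation k u -> has_alternation k w.
Proof. by move=> uw [a [b [ab h]]]; exists a, b; split=> //; apply: subseq_trans uw. Qed.

(* If L ++ R avoids alternations of length k + 1, then the symbols shared by
   L and R, restricted to either half, avoid alternations of length k: an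
   alternation in L extends by a later occurrence of its last symbol in R,
   and one in R by an earlier occurrence of its first symbol in L. *)
Lemma shared_no_alternation k L R : 2 <= k ->
  ~ has_alternation k.+1 (L ++ R) ->
  ~ has_alternation k [seq x <- L | (x \in L) && (x \in R)] /\
  ~ has_alternation k [seq x <- R | (x \in L) && (x \in R)].
Proof.
move=> k2 noalt; split=> -[a [b [ab altab]]]; apply: noalt;
  have /andP[aab bab] := alt_word_mem a b k k2.
- have lastR : (if odd k then b else a) \in R.
    have : (if odd k then b else a) \in [seq x <- L | (x \in L) && (x \in R)].
      by apply: (mem_subseq altab); case: (odd k).
    by rewrite mem_filter => /andP[/andP[]].
  exists a, b; split=> //; rewrite alt_word_rcons -cats1.
  apply: cat_subseq; last by rewrite sub1seq.
  exact: subseq_trans altab (filter_subseq _ _).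
- have firstL : b \in L.
    by have := mem_subseq altab bab; rewrite mem_filter => /andP[/andP[]].
  exists b, a; split; first by move=> ba; apply: ab.
  rewrite alt_word_cons -cat1s; apply: cat_subseq; first by rewrite sub1seq.
  exact: subseq_trans altab (filter_subseq _ _).
Qed.

Lemma at_most_m_blocks_filter (p : pred nat) m w :
  at_most_m_blocks m w -> at_most_m_blocks m (filter p w).
Proof.
case=> bs [sz [blocks ->]]; exists (map (filter p) bs); split; first by rewrite size_map.
split; last by rewrite filter_flatten.
rewrite all_map; apply/allP => b bin /=; rewrite /block filter_uniq //.
by move/allP: blocks => /(_ b bin).
Qed.

Lemma at_most_m_blocks_split k m w : at_most_m_blocks m w ->
  exists L R, [/\ w = L ++ R, at_most_m_blocks k L & at_most_m_blocks (m - k) R].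
Proof.
case=> bs [sz [blocks ->]].
move: blocks; rewrite -{1}(cat_take_drop k bs) all_cat => /andP[bl br].
exists (flatten (take k bs)), (flatten (drop k bs)); split.
- by rewrite -flatten_cat cat_take_drop.
- by exists (take k bs); split=> //; rewrite size_take; case: ifP; lia.
- by exists (drop k bs); split=> //; rewrite size_drop; lia.
Qed.

Lemma admissible_one_block s n m w : m <= 1 -> admissible s n m w -> size w <= n.
Proof.
move=> m1 [symb [_ [bs [sz [blocks ew]]]]]; subst w.
case: bs sz blocks symb => [|b [|c bs]] //= sz; last lia.
by rewrite cats0 andbT => ub; rewrite undup_id.
Qed.

Fixpoint adj_repeats (w : seq nat) : nat :=
  match w with
  | x :: ((y :: _) as t) => (x == y) + adj_repeats t
  | _ => 0
  end.

Lemma adj_repeats_cat_le u v : adj_repeats (u ++ v) <= adj_repeats u + adj_repeats v + 1.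
Proof.
elim: u => [|x [|y u] IH] /=; first lia.
  by case: v {IH} => [|z v] //=; case: (x == z) => /=; lia.
by move: IH => /=; lia.
Qed.

Lemma adj_repeats_cat_ge u v : adj_repeats u + adj_repeats v <= adj_repeats (u ++ v).
Proof.
elim: u => [|x [|y u] IH] //=; first by case: v {IH} => [|z v] //=; lia.
by move: IH => /=; lia.
Qed.

Lemma adj_repeats_dup u x v :
  adj_repeats (u ++ x :: x :: v) = (adj_repeats (u ++ x :: v)).+1.
Proof.
elim: u => [|y [|z u] IH] /=; first by rewrite eqxx add1n.
  by rewrite eqxx /=; lia.
by move: IH => /=; lia.
Qed.

Lemma adj_repeats_uniq w : uniq w -> adj_repeats w = 0.
Proof.
elim: w => [|x [|y w] IH] // /andP[xn uw].
have -> : adj_repeats [:: x, y & w] = (x == y) + adj_repeats (y :: w) by [].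
by rewrite (IH uw) addn0; case: eqP xn => // ->; rewrite inE eqxx.
Qed.

Lemma adj_repeats_flatten bs : all block bs -> adj_repeats (flatten bs) <= (size bs).-1.
Proof.
elim: bs => [|b [|c bs] IH] //= /andP[ub blocks].
  by rewrite cats0 adj_repeats_uniq.
have := adj_repeats_cat_le b (flatten (c :: bs)); rewrite (adj_repeats_uniq _ ub).
by have := IH blocks; rewrite /=; lia.
Qed.

Lemma adj_repeats_pos w : 0 < adj_repeats w -> exists u x v, w = u ++ x :: x :: v.
Proof.
elim: w => [|x [|y w] IH] //=; case: eqP => [<- _|_ /= pos]; first by exists [::], x, w.
by have [u [z [v ->]]] := IH pos; exists (x :: u), z, v.
Qed.

Lemma adj_repeats_delete u y v : adj_repeats (u ++ v) <= adj_repeats (u ++ y :: v) + 1.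
Proof.
have := adj_repeats_cat_le u v; have := adj_repeats_cat_ge u (y :: v).
by have := adj_repeats_cat_ge [:: y] v; rewrite /=; lia.
Qed.

Lemma first_occurrence (x : nat) w :
  x \in w -> exists u v, w = u ++ x :: v /\ x \notin u.
Proof.
elim: w => [|y w IH] //; rewrite inE; case: eqP => [-> _|ne /= xw]; first by exists [::], w.
have [u [v [-> xu]]] := IH xw; exists (y :: u), v; split=> //.
by rewrite inE negb_or xu andbT; apply/eqP => e; apply: ne.
Qed.

(* A nonempty abab-free sequence without adjacent repetitions has a symbol
   occurring exactly once: if the first symbol x recurs, the segment strictly
   between its first two occurrences has such a symbol y, and y cannot occur
   after the second x, otherwise x y x y. *)
Lemma singleton_symbol w : w <> [::] -> adj_repeats w = 0 ->
  ~ has_alternation 4 w -> exists y, count_mem y w = 1.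
Proof.
elim: {w}_.+1 {-2}w (ltnSn (size w)) => // N IH [|x t] // szN _ noadj noalt.
case xt: (x \in t); last by exists x; rewrite /= eqxx (count_memPn (negbT xt)).
have [[|z u] [v [et xu]]] := first_occurrence _ _ xt.
  by move: noadj; rewrite et /= eqxx.
have ew : x :: t = [:: x] ++ (z :: u) ++ (x :: v) by rewrite et.
have [y yonce] : exists y, count_mem y (z :: u) = 1.
  apply: IH => //.
  - by move: szN; rewrite ew !size_cat /=; lia.
  - have := adj_repeats_cat_ge [:: x] ((z :: u) ++ (x :: v)).
    by have := adj_repeats_cat_ge (z :: u) (x :: v); rewrite -ew noadj; lia.
  - apply: contra_not noalt => /has_alternation_subseq; apply.
    by rewrite ew; apply: subseq_trans (suffix_subseq [:: x] _); apply: prefix_subseq.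
have xy : x != y by apply/eqP => exy; move: yonce; rewrite -exy (count_memPn xu).
have yu : y \in z :: u by rewrite -has_pred1 has_count yonce.
have yv : y \notin v.
  apply/negP => yv; apply: noalt; exists x, y; split; first exact/eqP.
  have -> : alt_word x y 4 = [:: x; y; x; y] by [].
  rewrite ew -cat1s; apply: cat_subseq => //.
  rewrite -cat1s; apply: cat_subseq; first by rewrite sub1seq.
  by rewrite /= eqxx sub1seq.
by exists y; rewrite ew !count_cat yonce /= (count_memPn yv) (negbTE xy).
Qed.

(* The Davenport-Schinzel estimate: delete an adjacent repetition, or else a
   symbol occurring once, and induct on the length. *)
Lemma abab_free_size w : ~ has_alternation 4 w ->
  size w <= 2 * size (undup w) + adj_repeats w.
Proof.
elim: {w}_.+1 {-2}w (ltnSn (size w)) => // N IH w szN noalt.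
have IHsub (u : seq nat) : subseq u w -> size u < size w ->
    size u <= 2 * size (undup u) + adj_repeats u.
  move=> uw ltu; apply: IH; first by move: szN; lia.
  exact: contra_not (has_alternation_subseq _ _ _ uw) noalt.
have undup_sub (u : seq nat) : subseq u w -> size (undup u) <= size (undup w).
  move=> uw; apply: uniq_leq_size; first exact: undup_uniq.
  by move=> z; rewrite !mem_undup; apply: mem_subseq.
case: (posnP (adj_repeats w)) => [noadj|/adj_repeats_pos [u [x [v ew]]]].
  case: w szN noalt noadj IHsub undup_sub => [|x t] // _ noalt noadj IHsub undup_sub.
  have [y yonce] : exists y, count_mem y (x :: t) = 1 by apply: singleton_symbol.
  have [u [v [ew yu]]] := first_occurrence y (x :: t) ltac:(by rewrite -has_pred1 has_count yonce).
  have yv : y \notin v.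
    by apply/count_memPn; move: yonce; rewrite ew count_cat /= eqxx (count_memPn yu); lia.
  have sub : subseq (u ++ v) (x :: t) by rewrite ew cat_subseq // subseq_cons.
  have more : (size (undup (u ++ v))).+1 <= size (undup (x :: t)).
    apply: (@uniq_leq_size _ (y :: undup (u ++ v))).
      by rewrite /= undup_uniq mem_undup mem_cat negb_or yu yv.
    move=> z; rewrite inE mem_undup => /orP[/eqP ->|zuv]; first by rewrite ew mem_undup mem_cat inE eqxx orbT.
    by rewrite mem_undup; apply: mem_subseq sub _ zuv.
  have szw : size (x :: t) = (size (u ++ v)).+1 by rewrite ew !size_cat /= addnS.
  have := IHsub _ sub ltac:(by rewrite szw).
  by have := adj_repeats_delete u y v; rewrite -ew noadj szw; lia.
have sub : subseq (u ++ x :: v) w by rewrite ew cat_subseq // subseq_cons.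
have := IHsub _ sub ltac:(by rewrite ew !size_cat /=; lia).
have := undup_sub _ sub; rewrite ew adj_repeats_dup !size_cat /=; lia.
Qed.

Lemma distinct_le_count (p : pred nat) u w : {subset u <= p} -> {subset u <= w} ->
  size (undup u) <= count p (undup w).
Proof.
move=> up uw; rewrite -size_filter; apply: uniq_leq_size; first exact: undup_uniq.
by move=> x; rewrite mem_filter !mem_undup => xu; rewrite uw // andbT; apply: up.
Qed.

Lemma count_disjoint3 (a b c : pred nat) s : (forall x, a x + b x + c x <= 1) ->
  count a s + count b s + count c s <= size s.
Proof. by move=> disj; elim: s => //= x s IH; have := disj x; lia. Qed.

Lemma admissible_filter s m (p q : pred nat) L w :
  subseq L w -> at_most_m_blocks m L -> ~ has_alternation s.+2 (filter p L) ->
  (forall x, x \in L -> p x -> q x) ->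
  admissible s (count q (undup w)) m (filter p L).
Proof.
move=> Lw blL noalt pq; split; [|split] => //; last exact: at_most_m_blocks_filter.
apply: distinct_le_count => x; rewrite mem_filter => /andP[px xL].
  exact: pq.
exact: mem_subseq Lw _ xL.
Qed.

Lemma expn_succ_ge j t : j ^ t.+1 + j ^ t <= j.+1 ^ t.+1.
Proof.
have mono : j ^ t <= j.+1 ^ t by elim: t => // t IH; rewrite !expnS leq_mul.
by rewrite !expnS; nia.
Qed.

(* Summing the bounds for the private (a) and shared (g) parts of the two
   halves, with k and m - k blocks, n = nL + nR + nG symbols and X = 2^(t+1). *)
Lemma combine_halves X P Q T n m k nL nR nG aL aR gL gR :
  k <= m -> P + Q <= T -> nL + nR + nG <= n ->
  aL <= 2 * X * nL + P * (k - 1) -> aR <= 2 * X * nR + P * (m - k - 1) ->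
  gL <= X * nG + Q * (k - 1) -> gR <= X * nG + Q * (m - k - 1) ->
  aL + gL + aR + gR <= 2 * X * n + T * (m - 1).
Proof.
move=> km PQT sumn haL haR hgL hgR.
have hm : (P + Q) * ((k - 1) + (m - k - 1)) <= T * (m - 1) by apply: leq_mul; lia.
have hn : X * (nL + nR + nG) <= X * n by apply: leq_mul.
by rewrite !mulnDr !mulnDl in hm hn; lia.
Qed.

Definition ds_bound (t : nat) : Prop :=
  forall j n m w, m <= 2 ^ j -> admissible t.+2 n m w ->
  size w <= 2 ^ t.+1 * n + j ^ t * (m - 1).

Lemma ds_bound0 : ds_bound 0.
Proof.
move=> j n m w _ [symb [noalt [bs [sz [blocks ew]]]]].
have := abab_free_size _ noalt; have := adj_repeats_flatten _ blocks.
by rewrite -ew expn0 expn1; lia.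
Qed.

Section Step.

Variable t : nat.
Hypothesis ds_t : ds_bound t.

Lemma halving_step j :
  (forall n m w, m <= 2 ^ j -> admissible t.+3 n m w ->
     size w <= 2 ^ t.+2 * n + j ^ t.+1 * (m - 1)) ->
  forall n m w, m <= 2 ^ j.+1 -> admissible t.+3 n m w ->
     size w <= 2 ^ t.+2 * n + j.+1 ^ t.+1 * (m - 1).
Proof.
move=> IHj n m w hm [symb [noalt blocks]].
have [L [R [ew blL blR]]] := at_most_m_blocks_split m./2 _ _ blocks.
have hmL : m./2 <= 2 ^ j by move: hm; rewrite expnS; lia.
have hmR : m - m./2 <= 2 ^ j by move: hm; rewrite expnS; lia.
have subL : subseq L w by rewrite ew prefix_subseq.
have subR : subseq R w by rewrite ew suffix_subseq.
pose shared x := (x \in L) && (x \in R).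
pose onlyL x := (x \in L) && (x \notin R).
pose onlyR x := (x \in R) && (x \notin L).
have [noaltL noaltR] := shared_no_alternation t.+4 L R isT ltac:(by rewrite -ew).
have szw : size w = size (filter (predC shared) L) + size (filter shared L)
                  + size (filter (predC shared) R) + size (filter shared R).
  by rewrite ew size_cat !size_filter -(count_predC shared L) -(count_predC shared R); lia.
have distinct : count onlyL (undup w) + count onlyR (undup w) + count shared (undup w) <= n.
  apply: leq_trans symb; apply: count_disjoint3 => x.
  by rewrite /onlyL /onlyR /shared; case: (x \in L); case: (x \in R).
have private_noalt (u : seq nat) : subseq u w ->
    ~ has_alternation t.+3.+2 (filter (predC shared) u).
  move=> uw; apply: contra_not noalt => /has_alternation_subseq; apply.
  exact: subseq_trans (filter_subseq _ _) uw.
have hAL := IHj _ _ _ hmL (admissible_filter _ _ _ onlyL _ _ subL blL (private_noalt _ subL)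
  ltac:(by move=> x xL; rewrite /= /shared /onlyL xL)).
have hAR := IHj _ _ _ hmR (admissible_filter _ _ _ onlyR _ _ subR blR (private_noalt _ subR)
  ltac:(by move=> x xR; rewrite /= /shared /onlyR xR andbT)).
have hGL := ds_t _ _ _ _ hmL (admissible_filter _ _ shared shared _ _ subL blL noaltL (fun _ _ sh => sh)).
have hGR := ds_t _ _ _ _ hmR (admissible_filter _ _ shared shared _ _ subR blR noaltR (fun _ _ sh => sh)).
rewrite szw [2 ^ t.+2]expnS; rewrite [2 ^ t.+2]expnS in hAL hAR.
by apply: combine_halves (expn_succ_ge j t) distinct hAL hAR hGL hGR; lia.
Qed.

Lemma ds_bound_step : ds_bound t.+1.
Proof.
move=> j; elim: j => [|j IHj] n m w hm adm; last exact: halving_step.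
have := admissible_one_block _ _ _ _ hm adm; have := expn_gt0 2 t.+2; nia.
Qed.

End Step.

Lemma ds_bound_all t : ds_bound t.
Proof. by elim: t => [|t IH]; [exact: ds_bound0|exact: ds_bound_step]. Qed.

Theorem mainTheorem9 (s n m i j' : nat) :
  2 <= s -> 1 <= n -> 1 <= m -> 1 <= i ->
  1 <= j' -> m <= ack i j' ->
  (forall j, 1 <= j -> j < j' -> ack i j < m) ->
  (i = 1 \/ (1 < i /\ j' = 1)) ->
  lambda_le s n m (2 ^ (s - 1) * n + j' ^ (s - 2) * (m - 1)).
Proof.
move=> s2 _ _ _ _ hm _ hi w adm.
have hm2 : m <= 2 ^ j'.
  case: hi => [ei|[i1 ej]]; first by move: hm; rewrite ei.
  by move: hm; rewrite ej; case: i i1 => [|[|i]].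
case: s s2 adm => [|[|t]] // _ adm.
by rewrite !subSS !subn0; exact: ds_bound_all t j' n m w hm2 adm.
Qed.
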